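(* Let $q$ be a prime power, $r\mid(q-1)$ with $r\ge3$, $q/2\le \ell\le q-1$, and $s\mid (q-1)/r$. The folded quantum Tamo–Barg code with parameters $q,r,\ell,s$ is a quantum locally recoverable code with locality $r$.
   Context: $[n]=\{0,\dots,n-1\}$, $\mathbb{F}_q^*=\mathbb{F}_q\setminus\{0\}$. For $S\subseteq\mathbb{Z}_{\ge0}$, $\mathbb{F}_q[X]^S=\{\sum_{i\in S}a_iX^i\}$, $\mathrm{ev}(f)=(f(x))_{x\in\mathbb{F}_q^*}$. Let $S=\{i\in[\ell]:i\not\equiv r-1\pmod r\}\cup\{i\in[q-1]:i\equiv1\pmod r\}$, $C=\mathrm{ev}(\mathbb{F}_q[X]^S)$; for $\ell\ge q/2$, $C^\perp\subseteq C$ and the quantum Tamo–Barg code is $\mathrm{CSS}(C,C)=\mathrm{span}\{\sum_{y\in C^\perp}|x+y\rangle:x\in C\}\subseteq(\mathbb{C}^q)^{\otimes(q-1)}$, qudits indexed by $\mathbb{F}_q^*$. Folding: fix a generator $\omega$ of $\mathbb{F}_q^*$ and for $i\in[(q-1)/s]$ group the $s$ qudits at positions $\{\omega^{si},\omega^{si+1},\dots,\omega^{si+s-1}\}$ into a single qudit of local dimension $q^s$; the resulting code of block length $(q-1)/s$ is the folded quantum Tamo–Barg code. A quantum code on qudit set $Q$ is locally recoverable with locality $r$ if for each $i\in Q$ there is $I_i\subseteq Q$ with $i\in I_i$, $|I_i|\le r$, and a quantum channel $\mathrm{Rec}_i$ from qudits $I_i\setminus\{i\}$ to qudits $I_i$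 with $(\mathrm{Rec}_i\otimes\mathrm{id})(\psi_{Q\setminus\{i\}})=\psi$ for every code state $\psi$. *)

From mathcomp Require Import all_boot all_order all_algebra all_field.
Set Implicit Arguments. Unset Strict Implicit. Unset Printing Implicit Defensive.
Import Order.TTheory GRing.Theory Num.Theory.
Local Open Scope ring_scope.

(* Qudit positions Q (finite), each qudit has local basis indexed by F    *)
(* (local dimension |F| = q).  Computational basis states of the whole    *)
(* system are words x : Q -> F; vectors / operators have entries in a    *)
(* numeric closed field Cf (e.g. the complex numbers).                   *)
Section Qudits.
Variables (F : finFieldType) (Q : finType) (Cf : numClosedFieldType).

Definition word := {ffun Q -> F}.
Definition qvec := word -> Cf.
Definition qop := word -> word -> Cf.

(* x is a basis configuration of the subsystem S (zero outside S). *)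
Definition onS (S : {set Q}) (x : word) : bool :=
  [forall j, (j \notin S) ==> (x j == 0)].

Definition glue (S : {set Q}) (x y : word) : word :=
  [ffun j => if j \in S then x j else y j].

Definition restr (S : {set Q}) (x : word) : word := glue S x [ffun=> 0].

(* partial trace over the qudits in B: the result is an operator on the
   qudits in ~: B (its value does not depend on the B-entries of x, y). *)
Definition ptrace (B : {set Q}) (rho : qop) : qop :=
  fun x y => \sum_(z : word | onS B z) rho (glue B z x) (glue B z y).

(* Kraus operators K k : (qudits A) -> (qudits E), K k u a with u on E, a on A;
   trace preservation: sum_k K_k^dagger K_k = id on the qudits A. *)
Definition kraus_tp (A E : {set Q}) (n : nat) (K : 'I_n -> qop) : Prop :=
  forall a a', onS A a -> onS A a' ->
    \sum_(k < n) \sum_(u : word | onS E u) (K k u a)^* * K k u a'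
      = (a == a')%:R.

(* (Rec tensor id)(sigma), where Rec has Kraus operators K from qudits A to
   qudits E, sigma is an operator on qudits (~: B) with A \subset ~: B,
   and id acts on the remaining qudits ~: E. *)
Definition apply_rec_id (A E : {set Q}) (n : nat) (K : 'I_n -> qop)
    (sigma : qop) : qop :=
  fun x x' => \sum_(k < n) \sum_(a : word | onS A a) \sum_(a' : word | onS A a')
     K k (restr E x) a * sigma (glue A a x) (glue A a' x') * (K k (restr E x') a')^*.

Definition density (rho : qop) : Prop :=
  [/\ forall x y, rho y x = (rho x y)^*,
      forall v : qvec, 0 <= \sum_x \sum_y (v x)^* * rho x y * v y
    & \sum_x rho x x = 1].

Definition dual (Ccl : {set word}) : {set word} :=
  [set y : word | [forall c in Ccl, \sum_j c j * y j == 0]].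

Definition inCSS (C1 C2 : {set word}) (v : qvec) : Prop :=
  exists alpha : word -> Cf, forall w,
    v w = \sum_(x in C1) alpha x * \sum_(y in dual C2) (w == x + y)%:R.

Definition code_state (code : qvec -> Prop) (rho : qop) : Prop :=
  density rho /\ forall y, code (fun x => rho x y).

End Qudits.

Section TamoBarg.
Variables (F : finFieldType) (r l : nat).

Definition Fstar := {x : F | x != 0}.

Definition TB_S (i : nat) : bool :=
  (((i < l) && (i %% r != r.-1)) || ((i < #|F|.-1) && (i %% r == 1)))%N.

(* C = ev(F_q[X]^S); since S \subset [q-1] a polynomial in F_q[X]^S is
   sum_{i < q-1, i in S} a_i X^i. *)
Definition TB_code : {set word F Fstar} :=
  [set c : word F Fstar | [exists a : {ffun 'I_(#|F|.-1) -> F},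
      [forall i : 'I_(#|F|.-1), (~~ TB_S i) ==> (a i == 0)] &&
      (c == [ffun p : Fstar => \sum_(i < #|F|.-1) a i * (val p) ^+ i])]].

Definition quantumTB (Cf : numClosedFieldType) : qvec F Fstar Cf -> Prop :=
  inCSS TB_code TB_code.

Definition fold_region (w : F) (s : nat) (I : {set 'I_(#|F|.-1 %/ s)}) : {set Fstar} :=
  [set p : Fstar | [exists i in I, exists t : 'I_s, val p == w ^+ (s * i + t)%N]].

Arguments fold_region w s I : clear implicits.

Definition folded_TB_QLRC (Cf : numClosedFieldType) (w : F) (s : nat) : Prop :=
  forall i : 'I_(#|F|.-1 %/ s), exists I : {set 'I_(#|F|.-1 %/ s)},
    [/\ i \in I, (#|I| <= r)%N &
      exists (n : nat) (K : 'I_n -> qop F Fstar Cf),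
        kraus_tp (fold_region w s (I :\ i)) (fold_region w s I) K /\
        forall rho, code_state (@quantumTB Cf) rho ->
          forall x x', apply_rec_id (fold_region w s (I :\ i)) (fold_region w s I) K
                         (ptrace (fold_region w s [set i]) rho) x x' = rho x x'].
End TamoBarg.

From mathcomp Require Import all_boot all_order all_algebra all_field.
From mathcomp Require Import ring zify.
Set Implicit Arguments. Unset Strict Implicit. Unset Printing Implicit Defensive.
Import Order.TTheory GRing.Theory Num.Theory.
Local Open Scope ring_scope.

(* Erasing a folded qudit erases the positions B = {w^e : e / s = i}.  For
   b in B the evaluation h_b of X * sum_k (X / b)^(r k) lies in C and in
   C^perp: its exponents are 1 mod r while those of C are not -1 mod r, so all
   power sums over F_q^* in <c, h_b> vanish.  It equals m p at the p with
   p^r = b^r (m = (q-1)/r) and 0 elsewhere, so it is supported on the r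
   folded qudits congruent to i modulo m/s, and on B it is a nonzero multiple
   of the indicator of b.  A code state is invariant under translations by
   C^perp and vanishes on words with a nonzero syndrome <x, h_b>, so the
   erased symbols are determined by the syndrome of the remaining symbols.
   The recovery channel sums, over all guesses k of the erased symbols, the
   map that corrects the accessible symbols towards k by adding an element of
   span {h_b}; only the guess with zero syndrome survives. *)

(** * Arithmetic *)

Lemma sum_nat_condE (T : finType) (P R : pred T) :
  (\sum_(t | P t) R t)%N = #|[set t | P t & R t]|.
Proof. by rewrite -sum1dep_card big_mkcondr; apply: eq_bigr => t _; case: (R t). Qed.

Lemma sum_mod_eq1 (V : nmodType) (G : nat -> V) n m r : (1 < r)%N -> n = (m * r)%N ->
  \sum_(j < n) (if (j %% r == 1)%N then G j else 0) = \sum_(k < m) G (k * r).+1.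
Proof.
move=> r_gt1 ->.
rewrite -(big_mkord xpredT (fun j => if (j %% r == 1)%N then G j else 0)).
rewrite big_nat_mul big_mkord; apply: eq_bigr => k _.
rewrite mulSn -{1}[(k * r)%N]add0n big_addn addnK big_mkord (bigD1 (Ordinal r_gt1)) //=.
rewrite big1 ?addr0 => [|i /eqP ni]; first by rewrite addnC modnMDl modn_small // eqxx addn1.
by rewrite addnC modnMDl modn_small //; case: eqP => // i1; case: ni; apply: val_inj.
Qed.

Lemma eqn_modMr e f m r : (0 < r)%N ->
  (e * r == f * r %[mod m * r])%N = (e == f %[mod m])%N.
Proof. by move=> r_gt0; rewrite -!muln_modl eqn_pmul2r. Qed.

Lemma modn_add_neq0 r i j : (1 < r)%N -> (i %% r != r.-1)%N -> (j %% r == 1)%N ->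
  ~~ (r %| i + j)%N.
Proof.
move=> r_gt1 ir /eqP jr; rewrite /dvdn -modnDm jr addn1 modn_small //.
by have := ltn_pmod i (ltnW r_gt1); move: ir; set x := (i %% r)%N; lia.
Qed.

Lemma ltn_mul_add s M i t : (i < M)%N -> (t < s)%N -> (s * i + t < M * s)%N.
Proof. by move=> iM ts; nia. Qed.

Lemma card_finField_natr (F : finFieldType) : (#|F|%:R : F) = 0.
Proof.
have : \sum_(x : F) x + 0 = \sum_(x : F) x + #|F|%:R.
  by rewrite addr0 {1}(reindex_inj (addIr 1)) big_split /= sumr_const.
by move/addrI.
Qed.

Lemma natr_dvdn_card_pred_neq0 (F : finFieldType) d :
  (d %| #|F|.-1)%N -> (d%:R : F) != 0.
Proof.
case/dvdnP=> e NE; apply: contra_neq (@oner_neq0 F) => d0.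
have : (#|F|.-1.+1%:R : F) = 0.
  by rewrite prednK ?card_finField_natr // (ltn_trans _ (finNzRing_gt1 F)).
by rewrite mulrSr NE natrM d0 mulr0 add0r.
Qed.

Lemma expf_card_pred (F : finFieldType) (x : F) : x != 0 -> x ^+ #|F|.-1 = 1.
Proof.
move=> x0; apply: (mulIf x0); rewrite mul1r -exprSr prednK ?expf_card //.
exact: ltn_trans (finNzRing_gt1 F).
Qed.

Lemma sum_expr_unity (R : idomainType) (z : R) n : z ^+ n = 1 ->
  \sum_(k < n) z ^+ k = if z == 1 then n%:R else 0.
Proof.
move=> zn; case: eqP => [-> | /eqP z1].
  by rewrite (eq_bigr (fun _ => 1)) ?sumr_const ?card_ord // => k _; rewrite expr1n.
apply/eqP; move: (subrX1 z n); rewrite zn subrr => /esym/eqP.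
by rewrite mulf_eq0 subr_eq0 (negbTE z1).
Qed.

(** * Words and CSS code states *)

Section Words.
Variables (F : finFieldType) (Q : finType).
Implicit Types (S : {set Q}) (x y z : word F Q).

Lemma wordDE x y j : (x + y) j = x j + y j.
Proof. by rewrite ffunE. Qed.

Lemma wordBE x y j : (x - y) j = x j - y j.
Proof. by rewrite !ffunE. Qed.

Definition wdot x y : F := \sum_j x j * y j.

Lemma wdotC x y : wdot x y = wdot y x.
Proof. by apply: eq_bigr => j _; rewrite mulrC. Qed.

Lemma wdotDl x y z : wdot (x + y) z = wdot x z + wdot y z.
Proof. by rewrite /wdot -big_split; apply: eq_bigr => j _; rewrite ffunE mulrDl. Qed.

Lemma wdotNl x y : wdot (- x) y = - wdot x y.
Proof. by rewrite /wdot -sumrN; apply: eq_bigr => j _; rewrite ffunE mulNr. Qed.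

Lemma wdot_sumr x (I : {set Q}) (lam : Q -> F) (g : Q -> word F Q) :
  wdot x [ffun j => \sum_(b in I) lam b * g b j] = \sum_(b in I) lam b * wdot x (g b).
Proof.
rewrite /wdot; under eq_bigr do rewrite ffunE mulr_sumr.
rewrite exchange_big; apply: eq_bigr => b _; rewrite mulr_sumr.
by apply: eq_bigr => j _; rewrite mulrCA.
Qed.

Lemma onS_out S x j : onS S x -> j \notin S -> x j = 0.
Proof. by move=> /forallP /(_ j) /implyP xS jS; apply/eqP; apply: xS. Qed.

Lemma onS_restr S x : onS S (restr S x).
Proof. by apply/forallP => j; apply/implyP => jS; rewrite !ffunE (negbTE jS). Qed.

Lemma onS0 S : onS S (0 : word F Q).
Proof. by apply/forallP => j; apply/implyP => _; rewrite ffunE. Qed.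

Lemma glueE S x y j : glue S x y j = if j \in S then x j else y j.
Proof. by rewrite ffunE. Qed.

Lemma restrE S x j : restr S x j = if j \in S then x j else 0.
Proof. by rewrite glueE ffunE. Qed.

Lemma onS_eqP S x y : onS S x -> onS S y ->
  reflect (forall j, j \in S -> x j = y j) (x == y).
Proof.
move=> xS yS; apply: (iffP eqP) => [-> // | exy]; apply/ffunP => j.
by case: (boolP (j \in S)) => [/exy // | jS]; rewrite !(onS_out _ jS).
Qed.

Lemma wdot_onS S x y b : onS S x -> b \in S ->
  (forall j, j \in S -> j != b -> y j = 0) -> wdot x y = x b * y b.
Proof.
move=> xS bS yS; rewrite /wdot (bigD1 b) //= big1 ?addr0 // => j /= jb.
case: (boolP (j \in S)) => jS; first by rewrite yS ?mulr0.
by rewrite (onS_out xS jS) mul0r.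
Qed.

Variable C : {set word F Q}.

Lemma dual_wdot c y : c \in C -> y \in dual C -> wdot c y = 0.
Proof. by move=> cC; rewrite inE => /forall_inP /(_ c cC) /eqP. Qed.

Lemma dual_sumr (I : {set Q}) (lam : Q -> F) (g : Q -> word F Q) :
  (forall b, b \in I -> g b \in dual C) ->
  [ffun j => \sum_(b in I) lam b * g b j] \in dual C.
Proof.
move=> gD; rewrite inE; apply/forall_inP => c cC; apply/eqP.
rewrite [X in X = _](wdot_sumr c I lam g) big1 // => b bI.
by rewrite (dual_wdot cC (gD b bI)) mulr0.
Qed.

Lemma dualD y d : y \in dual C -> d \in dual C -> y + d \in dual C.
Proof.
move=> yD dD; rewrite inE; apply/forall_inP => c cC; apply/eqP.
rewrite [X in X = _](wdotC c (y + d)) wdotDl -!(wdotC c).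
by rewrite !(dual_wdot cC) ?addr0.
Qed.

Lemma dualN y : y \in dual C -> - y \in dual C.
Proof.
move=> yD; rewrite inE; apply/forall_inP => c cC; apply/eqP.
by rewrite [X in X = _](wdotC c (- y)) wdotNl wdotC (dual_wdot cC yD) oppr0.
Qed.

Lemma dualDr y d : d \in dual C -> (y + d \in dual C) = (y \in dual C).
Proof.
move=> dD; apply/idP/idP => [yd|]; last by move/dualD; apply.
by rewrite -(addrK d y); apply: dualD; last exact: dualN.
Qed.

End Words.

Section CSSCodeStates.
Variables (F : finFieldType) (Q : finType) (Cf : numClosedFieldType).
Variable C : {set word F Q}.
Implicit Types (v : qvec F Q Cf) (rho : qop F Q Cf) (x y d g : word F Q).

Lemma inCSS_dualE v : inCSS C C v ->
  exists alpha : word F Q -> Cf,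
    forall x, v x = \sum_(c in C) alpha c * (x - c \in dual C)%:R.
Proof.
case=> alpha vE; exists alpha => x; rewrite vE; apply: eq_bigr => c _.
congr (_ * _); case: (boolP (x - c \in dual C)) => xcD.
  rewrite (bigD1 (x - c)) //= (addrC c) subrK eqxx big1 ?addr0 // => y /andP[_ yxc].
  by rewrite (addrC c) -subr_eq eq_sym (negbTE yxc).
rewrite big1 // => y yD; case: eqP => // xE; move: xcD.
by rewrite xE addrC addKr yD.
Qed.

Lemma inCSS_translate v x d : inCSS C C v -> d \in dual C -> v (x + d) = v x.
Proof.
move=> /inCSS_dualE[alpha vE] dD; rewrite !vE; apply: eq_bigr => c _.
by rewrite addrAC (dualDr _ dD).
Qed.

Lemma inCSS_syndrome v x g : inCSS C C v -> g \in C -> g \in dual C ->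
  wdot x g != 0 -> v x = 0.
Proof.
move=> /inCSS_dualE[alpha vE] gC gD xg; rewrite vE big1 // => c cC.
case: (boolP (x - c \in dual C)) => [xcD | _]; last by rewrite mulr0.
suff: wdot x g = 0 by move/eqP; rewrite (negbTE xg).
by rewrite -(subrK c x) wdotDl wdotC (dual_wdot gC xcD) (dual_wdot cC gD) addr0.
Qed.

Section CodeState.
Variable rho : qop F Q Cf.
Hypothesis rho_code : code_state (inCSS C C) rho.

Lemma code_state_adj x y : rho y x = (rho x y)^*.
Proof. by case: rho_code => -[]. Qed.

Lemma code_state_translatel x y d : d \in dual C -> rho (x + d) y = rho x y.
Proof. by case: rho_code => _ rhoC; exact: (inCSS_translate x (rhoC y)). Qed.

Lemma code_state_translater x y d : d \in dual C -> rho x (y + d) = rho x y.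
Proof. by move=> dD; rewrite code_state_adj code_state_translatel // -code_state_adj. Qed.

Lemma code_state_syndromel x y g : g \in C -> g \in dual C ->
  wdot x g != 0 -> rho x y = 0.
Proof. by case: rho_code => _ rhoC; exact: (inCSS_syndrome (rhoC y)). Qed.

Lemma code_state_syndromer x y g : g \in C -> g \in dual C ->
  wdot y g != 0 -> rho x y = 0.
Proof.
by move=> gC gD yg; rewrite code_state_adj (code_state_syndromel _ gC gD yg) conjC0.
Qed.

End CodeState.
End CSSCodeStates.

(** * Recovery of an erased set of qudits *)

Section ErasureRecovery.
Variables (F : finFieldType) (Q : finType) (Cf : numClosedFieldType).
Variables (C : {set word F Q}) (B E : {set Q}) (h : Q -> word F Q).
Hypotheses (sub_BE : B \subset E)
  (h_code : forall b, b \in B -> h b \in C)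
  (h_dual : forall b, b \in B -> h b \in dual C)
  (h_supp : forall b j, b \in B -> j \notin E -> h b j = 0)
  (h_diag : forall b, b \in B -> h b b != 0)
  (h_offdiag : forall b b', b \in B -> b' \in B -> b' != b -> h b b' = 0).
Local Notation A := (E :\: B).
Implicit Types (rho : qop F Q Cf) (a k u v x y z : word F Q).

Definition syndrome_free u := [forall b in B, wdot u (h b) == 0].

Definition correction k u : word F Q :=
  [ffun j => \sum_(b in B) (k b - u b) / h b b * h b j].

Definition corrected k u := restr A (u + correction k u).

Lemma correction_dual k u : correction k u \in dual C.
Proof. exact: dual_sumr. Qed.

Lemma wdot_correction k u b : b \in B -> wdot (correction k u) (h b) = 0.
Proof.
move=> bB; rewrite wdotC wdot_sumr big1 // => b' b'B.
by rewrite (dual_wdot (h_code bB) (h_dual b'B)) mulr0.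
Qed.

Lemma wdot_onB v b : onS B v -> b \in B -> wdot v (h b) = v b * h b b.
Proof. by move=> vB bB; apply: (wdot_onS vB bB) => j jB jb; apply: h_offdiag. Qed.

Lemma correction_onB k u j : j \in B -> correction k u j = k j - u j.
Proof.
move=> jB; rewrite ffunE (bigD1 j) //= big1 ?addr0 ?divfK ?h_diag // => b /andP[bB bj].
by rewrite (h_offdiag bB jB) ?mulr0 // eq_sym.
Qed.

Lemma correction_out k u j : j \notin E -> correction k u j = 0.
Proof. by move=> jE; rewrite ffunE big1 // => b bB; rewrite (h_supp bB jE) mulr0. Qed.

Lemma eq_correction k u v : (forall b, b \in B -> u b = v b) ->
  correction k u = correction k v.
Proof. by move=> uv; apply/ffunP => j; rewrite !ffunE; apply: eq_bigr => b /uv ->. Qed.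

Lemma correction_restrB k z : correction k (restr B z) = correction k z.
Proof. by apply: eq_correction => b bB; rewrite restrE bB. Qed.

Lemma onS_corrected k u : onS A (corrected k u).
Proof. exact: onS_restr. Qed.

Lemma syndrome_free_restr x : syndrome_free (restr E x) = syndrome_free x.
Proof.
apply: eq_forallb_in => b bB; congr (_ == 0); apply: eq_bigr => j _.
by rewrite restrE; case: ifP => // /negbT jE; rewrite (h_supp bB jE) !mulr0.
Qed.

Lemma syndrome_free_correction k u :
  syndrome_free (u + correction k u) = syndrome_free u.
Proof. by apply: eq_forallb_in => b bB; rewrite wdotDl wdot_correction // addr0. Qed.

Lemma glue_corrected k u : onS E u -> glue B k (corrected k u) = u + correction k u.
Proof.
move=> uE; apply/ffunP => j; rewrite glueE restrE wordDE inE.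
case: (boolP (j \in B)) => /= jB; first by rewrite correction_onB // addrC subrK.
by case: ifP => // /negbT jE; rewrite correction_out // (onS_out uE jE) addr0.
Qed.

Lemma glue_corrected_restr z k x :
  glue B z (glue A (corrected k (restr E x)) x) = x + restr B (z - k) + correction k x.
Proof.
rewrite /corrected (@eq_correction k (restr E x) x) => [|b bB]; last first.
  by rewrite restrE (subsetP sub_BE).
apply/ffunP => j; move: (correction_onB k x (j:=j)) (correction_out k x (j:=j)).
move: (correction k x) => c cB cE; rewrite !ffunE inE.
case: (boolP (j \in B)) => /= jB; first by rewrite cB //; ring.
by case: (boolP (j \in E)) => jE; rewrite ?addr0 // cE ?addr0.
Qed.

Lemma ptrace_corrected rho x y k : code_state (inCSS C C) rho ->
  syndrome_free x -> syndrome_free y -> onS B k ->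
  ptrace B rho (glue A (corrected k (restr E x)) x) (glue A (corrected k (restr E y)) y)
    = rho x y.
Proof.
move=> rhoC sfx sfy kB; rewrite /ptrace (bigD1 k) //= big1 => [|z /andP[zB zk]].
  rewrite !glue_corrected_restr (code_state_translatel rhoC) ?correction_dual //.
  rewrite (code_state_translater rhoC) ?correction_dual //.
  have -> : restr B (k - k) = 0 by apply/ffunP => j; rewrite restrE subrr ffunE; case: ifP.
  by rewrite !addr0.
rewrite !glue_corrected_restr (code_state_translatel rhoC) ?correction_dual //.
rewrite (code_state_translater rhoC) ?correction_dual //.
have /forall_inPn[b bB zkb] : ~~ [forall b in B, z b == k b].
  by apply: contra zk => /forall_inP zk; apply/(onS_eqP zB kB) => j /zk /eqP.
apply: (code_state_syndromel rhoC _ (h_code bB) (h_dual bB)).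
rewrite wdotDl (eqP (forall_inP sfx b bB)) add0r wdot_onB ?onS_restr //.
by rewrite restrE bB !ffunE mulf_neq0 ?h_diag ?subr_eq0.
Qed.

Lemma wdot_glueB k a b : onS A a -> b \in B ->
  wdot (glue B k a) (h b) = wdot a (h b) + k b * h b b.
Proof.
move=> aA bB; have -> : glue B k a = a + restr B k.
  apply/ffunP => j; rewrite glueE wordDE restrE.
  by case: ifP => jB; rewrite ?addr0 // (onS_out aA) ?add0r // inE jB.
by rewrite wdotDl (wdot_onB (onS_restr B k) bB) restrE bB.
Qed.

Definition erased_values a : word F Q :=
  [ffun j => if j \in B then - wdot a (h j) / h j j else 0].

Lemma syndrome_free_glue k a : onS A a ->
  (onS B k && syndrome_free (glue B k a)) = (k == erased_values a).
Proof.
move=> aA; apply/andP/eqP => [[kB /forall_inP sf] | ->].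
  apply/ffunP => j; rewrite ffunE; case: ifP => [jB | /negbT jB]; last exact: onS_out kB jB.
  move: (sf j jB); rewrite wdot_glueB // addrC addr_eq0 => /eqP <-.
  by rewrite mulfK ?h_diag.
split; first by apply/forallP => j; apply/implyP => jB; rewrite ffunE (negbTE jB).
by apply/forall_inP => b bB; rewrite wdot_glueB // ffunE bB divfK ?h_diag // addrN.
Qed.

Definition uncorrected k a z := glue B z (restr A (a - correction k z)).

Lemma uncorrected_inj k a : {in [set z | onS B z] &, injective (uncorrected k a)}.
Proof.
move=> z1 z2; rewrite !inE => z1B z2B e; apply/eqP/(onS_eqP z1B z2B) => j jB.
by move/ffunP/(_ j): e; rewrite !glueE jB.
Qed.

Lemma corrected_preimage k a : onS A a -> syndrome_free (glue B k a) ->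
  [set u | onS E u & syndrome_free u && (a == corrected k u)]
    = uncorrected k a @: [set z | onS B z].
Proof.
move=> aA sfa; apply/setP => u; rewrite inE; apply/idP/imsetP.
  case/andP=> uE /andP[_ /eqP ->]; exists (restr B u); first by rewrite inE onS_restr.
  rewrite /uncorrected correction_restrB /corrected; move: (correction k u) => c.
  apply/ffunP => j; rewrite !ffunE inE; case: (boolP (j \in B)) => //= jB.
  by case: (boolP (j \in E)) => jE; rewrite ?addrK ?(onS_out uE jE).
case=> z; rewrite inE => zB ->.
have cz : correction k (uncorrected k a z) = correction k z.
  by apply: eq_correction => b bB; rewrite glueE bB.
have uE : onS E (uncorrected k a z).
  apply/forallP => j; apply/implyP => jE; rewrite glueE restrE inE (negbTE jE) andbF.
  by case: ifP => // jB; case/negP: jE; apply: (subsetP sub_BE).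
have aE : corrected k (uncorrected k a z) = a.
  apply/ffunP => j; rewrite /corrected cz restrE wordDE glueE restrE wordBE.
  case: (boolP (j \in A)) => jA; last by rewrite (onS_out aA jA).
  by case/setDP: jA => _ /negbTE ->; rewrite subrK.
by rewrite uE aE eqxx andbT -(syndrome_free_correction k) -glue_corrected // aE.
Qed.

Definition card_onB := #|[set z : word F Q | onS B z]|.

Lemma card_onB_neq0 : (card_onB%:R : Cf) != 0.
Proof. by rewrite pnatr_eq0 -lt0n; apply/card_gt0P; exists 0; rewrite inE onS0. Qed.

Lemma sum_corrected_preimage a : onS A a ->
  \sum_k \sum_(u | onS E u) (onS B k && syndrome_free u && (a == corrected k u) : nat)
    = card_onB.
Proof.
move=> aA; rewrite (bigD1 (erased_values a)) //= [\sum_(k | k != _) _]big1 => [|k kna].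
  set k := erased_values a; have /andP[kB sfa] : onS B k && syndrome_free (glue B k a).
    by rewrite syndrome_free_glue.
  rewrite Monoid.mulm1 kB /card_onB -(card_in_imset (@uncorrected_inj k a)).
  by rewrite -corrected_preimage // sum_nat_condE.
apply: big1 => u uE; case: (boolP (onS B k)) => //= kB.
case: (boolP (syndrome_free u)) => //= sfu; case: eqP => // aE; case/negP: kna.
by rewrite -syndrome_free_glue // kB aE glue_corrected // syndrome_free_correction.
Qed.

Definition rec_scale : Cf := sqrtC (card_onB%:R^-1).

Lemma rec_scale_norm2 : rec_scale^* * rec_scale = card_onB%:R^-1.
Proof. by rewrite geC0_conj ?sqrtC_ge0 ?invr_ge0 ?ler0n // -expr2 sqrtCK. Qed.

(* The Kraus operator for the guess k of the erased symbols sends the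
   accessible symbols a to the normalised sum of the syndrome-free words u on
   E whose correction towards k restricts to a on A.  Only the guess
   k = erased_values a contributes, with card_onB such words. *)
Definition rec_kraus k : qop F Q Cf :=
  fun u a => rec_scale * (onS B k && syndrome_free u && (a == corrected k u))%:R.

Lemma rec_kraus_tp a a' : onS A a -> onS A a' ->
  \sum_k \sum_(u | onS E u) (rec_kraus k u a)^* * rec_kraus k u a' = (a == a')%:R.
Proof.
move=> aA aA'; under eq_bigr => k _ do under eq_bigr => u _ do
  rewrite rmorphM /= conjC_nat mulrACA rec_scale_norm2 -natrM mulnb.
case: eqVneq => [<- | neq_aa'].
  under eq_bigr => k _ do under eq_bigr => u _ do rewrite andbb.
  under eq_bigr => k _ do rewrite -mulr_sumr -natr_sum.
  by rewrite -mulr_sumr -natr_sum sum_corrected_preimage // mulVf ?card_onB_neq0.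
rewrite big1 // => k _; rewrite big1 // => u _.
case: (boolP (a == corrected k u)) => [/eqP aE|]; last by rewrite !andbF mulr0.
case: (boolP (a' == corrected k u)) => [/eqP a'E|]; last by rewrite !andbF mulr0.
by rewrite aE a'E eqxx in neq_aa'.
Qed.

Lemma rec_kraus_sandwich k x y (sigma : qop F Q Cf) :
  \sum_(a | onS A a) \sum_(a' | onS A a')
     rec_kraus k (restr E x) a * sigma (glue A a x) (glue A a' y)
       * (rec_kraus k (restr E y) a')^*
  = card_onB%:R^-1 * (onS B k && syndrome_free x && syndrome_free y)%:R
      * sigma (glue A (corrected k (restr E x)) x) (glue A (corrected k (restr E y)) y).
Proof.
rewrite (bigD1 (corrected k (restr E x))) ?onS_corrected //= [X in _ + X]big1 ?addr0.
  rewrite (bigD1 (corrected k (restr E y))) ?onS_corrected //= big1 ?addr0.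
    rewrite /rec_kraus !eqxx !andbT !syndrome_free_restr rmorphM /= conjC_nat.
    rewrite -rec_scale_norm2.
    by case: (onS B k) (syndrome_free x) (syndrome_free y) => [] [] [];
      rewrite /= ?mulr0 ?mul0r //; ring.
  by move=> a' /andP[_ /negbTE aT]; rewrite /rec_kraus aT andbF mulr0 conjC0 mulr0.
move=> a /andP[_ /negbTE aT]; apply: big1 => a' _.
by rewrite /rec_kraus aT andbF mulr0 !mul0r.
Qed.

Lemma rec_kraus_correct rho x y : code_state (inCSS C C) rho ->
  \sum_k \sum_(a | onS A a) \sum_(a' | onS A a')
     rec_kraus k (restr E x) a * ptrace B rho (glue A a x) (glue A a' y)
       * (rec_kraus k (restr E y) a')^*
  = rho x y.
Proof.
move=> rhoC; under eq_bigr => k _ do rewrite rec_kraus_sandwich.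
have [sfx | /forall_inPn[b bB xb]] := boolP (syndrome_free x); last first.
  rewrite (code_state_syndromel rhoC _ (h_code bB) (h_dual bB) xb) big1 // => k _.
  by rewrite andbF mulr0 mul0r.
have [sfy | /forall_inPn[b bB yb]] := boolP (syndrome_free y); last first.
  rewrite (code_state_syndromer rhoC _ (h_code bB) (h_dual bB) yb) big1 // => k _.
  by rewrite andbF mulr0 mul0r.
rewrite (eq_bigr (fun k => card_onB%:R^-1 * (onS B k)%:R * rho x y)) => [|k _].
  rewrite -big_distrl -mulr_sumr -natr_sum sum_nat_condE /= -/card_onB.
  by rewrite mulVf ?mul1r ?card_onB_neq0.
rewrite !andbT; case: (boolP (onS B k)) => kB; first by rewrite ptrace_corrected.
by rewrite /= !mulr0 !mul0r.
Qed.

Theorem erasure_recovery : exists (n : nat) (K : 'I_n -> qop F Q Cf),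
  kraus_tp A E K /\ forall rho, code_state (inCSS C C) rho ->
     forall x x', apply_rec_id A E K (ptrace B rho) x x' = rho x x'.
Proof.
exists #|word F Q|, (fun i => rec_kraus (enum_val i)); split.
  move=> a a' aA aA'; rewrite -(rec_kraus_tp aA aA').
  by rewrite (big_enum_val (A := word F Q)).
move=> rho rhoC x x'; rewrite -(rec_kraus_correct x x' rhoC).
by rewrite /apply_rec_id (big_enum_val (A := word F Q)).
Qed.

End ErasureRecovery.

(** * Folded Tamo-Barg codes *)

Section DiscreteLog.
Variables (F : finFieldType) (w : F).
Local Notation N := #|F|.-1.
Hypothesis w_prim : N.-primitive_root w.

Lemma primitive_root_neq0 : w != 0.
Proof.
apply: contraTneq (oner_neq0 F) => w0.
by rewrite -(prim_expr_order w_prim) w0 expr0n gtn_eqF ?(prim_order_gt0 w_prim) //= eqxx.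
Qed.

Definition dlog (p : Fstar F) : 'I_N :=
  sval (prim_rootP w_prim (expf_card_pred (valP p))).

Lemma dlogE p : val p = w ^+ dlog p.
Proof. exact: svalP (prim_rootP w_prim (expf_card_pred (valP p))). Qed.

Lemma eq_expw e1 e2 : (e1 < N)%N -> (e2 < N)%N -> (w ^+ e1 == w ^+ e2) = (e1 == e2).
Proof. by move=> e1N e2N; rewrite (eq_prim_root_expr w_prim) !modn_small. Qed.

Lemma sum_Fstar_expr e : ~~ (N %| e)%N -> \sum_(p : Fstar F) val p ^+ e = 0.
Proof.
move=> Ne; have w0 := primitive_root_neq0.
pose mulw (p : Fstar F) : Fstar F := exist _ (w * val p) (mulf_neq0 w0 (valP p)).
have mulw_inj : injective mulw by move=> p q /(congr1 val) /(mulfI w0) /val_inj.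
have : \sum_(p : Fstar F) val p ^+ e = w ^+ e * \sum_(p : Fstar F) val p ^+ e.
  by rewrite {1}(reindex_inj mulw_inj) mulr_sumr; apply: eq_bigr => p _; rewrite exprMn.
move/eqP; rewrite -subr_eq0 -{1}[X in X - _]mul1r -mulrBl mulf_eq0 subr_eq0 eq_sym.
by rewrite -(prim_order_dvd w_prim) (negbTE Ne) => /eqP.
Qed.

End DiscreteLog.

Section Folding.
Variables (F : finFieldType) (s : nat) (w : F).
Local Notation N := #|F|.-1.
Local Notation M := (N %/ s)%N.
Hypotheses (s_dvd : (s %| N)%N) (w_prim : N.-primitive_root w).

Let NsE : N = (M * s)%N := esym (divnK s_dvd).

Let s_gt0 : (0 < s)%N.
Proof. by move: (prim_order_gt0 w_prim); rewrite NsE muln_gt0 => /andP[]. Qed.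

Lemma fold_block_subproof p : (dlog w_prim p %/ s < M)%N.
Proof. by rewrite ltn_divLR // -NsE. Qed.

Definition fold_block p : 'I_M := Ordinal (fold_block_subproof p).

Lemma mem_fold_region p (J : {set 'I_M}) : (p \in fold_region w J) = (fold_block p \in J).
Proof.
rewrite inE; apply/existsP/idP => [[i /andP[iJ /existsP[t /eqP pE]]] | pJ].
  suff -> : fold_block p = i by [].
  have lt_N : (s * i + t < N)%N.
    by have := ltn_mul_add (ltn_ord i) (ltn_ord t); rewrite -NsE.
  have dlog_pE : dlog w_prim p = (s * i + t)%N :> nat.
    by apply/eqP; rewrite -(eq_expw w_prim) // -dlogE pE.
  by apply: val_inj; rewrite /= dlog_pE mulnC divnMDl // (divn_small (ltn_ord t)) addn0.
exists (fold_block p); rewrite pJ; apply/existsP.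
exists (Ordinal (ltn_pmod (dlog w_prim p) s_gt0)).
by rewrite (dlogE w_prim) /= mulnC -divn_eq.
Qed.

End Folding.

Section CheckVectors.
Variables (F : finFieldType) (r : nat).
Local Notation N := #|F|.-1.
Local Notation m := (N %/ r)%N.
Hypothesis r_dvd : (r %| N)%N.

Definition check_coef (b : Fstar F) : {ffun 'I_N -> F} :=
  [ffun j : 'I_N => if (j %% r == 1)%N then (val b ^+ j.-1)^-1 else 0].

Definition check_vec b : word F (Fstar F) :=
  [ffun p : Fstar F => \sum_(i < N) check_coef b i * val p ^+ i].

Lemma check_vec_code l b : check_vec b \in TB_code F r l.
Proof.
rewrite inE; apply/existsP; exists (check_coef b); rewrite eqxx andbT.
apply/forallP => j; apply/implyP; rewrite ffunE /TB_S.
by case: ifP => // jr; rewrite ltn_ord orbT.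
Qed.

Lemma check_vec_dual (w : F) l b : (3 <= r)%N -> N.-primitive_root w ->
  check_vec b \in dual (TB_code F r l).
Proof.
move=> r_ge3 w_prim; rewrite inE; apply/forall_inP => c.
rewrite inE => /existsP[a /andP[/forallP aS /eqP ->]].
apply/eqP; transitivity (\sum_(i < N) \sum_(j < N)
    a i * check_coef b j * \sum_(p : Fstar F) val p ^+ (i + j)).
  under eq_bigr => p _ do rewrite !ffunE mulr_suml.
  rewrite exchange_big; apply: eq_bigr => i _; under eq_bigr => p _ do rewrite mulr_sumr.
  rewrite exchange_big; apply: eq_bigr => j _; rewrite mulr_sumr.
  by apply: eq_bigr => p _; rewrite exprD; ring.
apply: big1 => i _; apply: big1 => j _.
have [-> | ai] := eqVneq (a i) 0; first by rewrite !mul0r.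
have [-> | bj] := eqVneq (check_coef b j) 0; first by rewrite mulr0 mul0r.
have ir : (i %% r != r.-1)%N.
  move: (aS i); rewrite (negbTE ai) implybF negbK => /orP[/andP[_ //] | /andP[_ /eqP ->]].
  by rewrite -(subnKC r_ge3).
have jr : (j %% r == 1)%N by move: bj; rewrite ffunE; case: ifP; rewrite ?eqxx.
rewrite (sum_Fstar_expr w_prim) ?mulr0 //.
by apply: contra (modn_add_neq0 (ltnW r_ge3) ir jr); apply: dvdn_trans.
Qed.

Lemma check_vecE b p : (1 < r)%N ->
  check_vec b p = if val p ^+ r == val b ^+ r then m%:R * val p else 0.
Proof.
move=> r_gt1; have b0 : val b != 0 := valP b.
set y := val p / val b.
have -> : check_vec b p = val p * \sum_(j < N) (if (j %% r == 1)%N then y ^+ j.-1 else 0).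
  rewrite ffunE mulr_sumr; apply: eq_bigr => j _; rewrite ffunE.
  case: ifP => jr; last by rewrite mul0r mulr0.
  have j_gt0 : (0 < j)%N by case: (nat_of_ord j) jr => //; rewrite mod0n.
  by rewrite -[in val p ^+ j](prednK j_gt0) exprS /y exprMn exprVn; ring.
rewrite (sum_mod_eq1 (fun j => y ^+ j.-1) r_gt1 (esym (divnK r_dvd))).
under eq_bigr => k _ do rewrite -pred_Sn mulnC exprM.
have yrm : (y ^+ r) ^+ m = 1.
  by rewrite -exprM mulnC divnK // /y expr_div_n !expf_card_pred ?divr1 ?(valP p).
rewrite sum_expr_unity // /y expr_div_n (can2_eq (divfK _) (mulfK _)) ?expf_neq0 // mul1r.
by case: ifP; rewrite ?mulr0 // mulrC.
Qed.

Lemma check_vec_diag b : (1 < r)%N -> check_vec b b != 0.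
Proof.
move=> r_gt1; rewrite check_vecE // eqxx mulf_neq0 ?(valP b) //.
exact/natr_dvdn_card_pred_neq0/dvdn_div.
Qed.

End CheckVectors.

Section RecoverySets.
Variables (F : finFieldType) (r s : nat) (w : F).
Local Notation N := #|F|.-1.
Local Notation m := (N %/ r)%N.
Local Notation M := (N %/ s)%N.
Local Notation m' := (m %/ s)%N.
Hypotheses (r_dvd : (r %| N)%N) (r_gt1 : (1 < r)%N) (s_dvd : (s %| m)%N)
  (w_prim : N.-primitive_root w).

Let s_dvdN : (s %| N)%N := dvdn_trans s_dvd (dvdn_div r_dvd).
Local Notation region := (@fold_region F w s).

Lemma expr_eq_dlog p b :
  (val p ^+ r == val b ^+ r) = (dlog w_prim p == dlog w_prim b %[mod m])%N.
Proof.
rewrite !(dlogE w_prim) -!exprM (eq_prim_root_expr w_prim).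
by rewrite -(eqn_modMr _ _ m (ltnW r_gt1)) divnK.
Qed.

Lemma mem_region1 p i : (p \in region [set i]) = (dlog w_prim p %/ s == i)%N.
Proof. by rewrite (mem_fold_region s_dvdN) inE. Qed.

Lemma check_vec_offdiag i b b' : b \in region [set i] -> b' \in region [set i] ->
  b' != b -> check_vec r b b' = 0.
Proof.
rewrite !mem_region1 => /eqP bi /eqP b'i; apply: contraNeq.
rewrite check_vecE // expr_eq_dlog; case: ifP => [eq_mod _ | _]; last by rewrite eqxx.
have eq_mod_s : (dlog w_prim b' = dlog w_prim b %[mod s])%N.
  by rewrite -(modn_dvdm _ s_dvd) (eqP eq_mod) modn_dvdm.
have e : dlog w_prim b' = dlog w_prim b :> nat.
  by rewrite (divn_eq (dlog w_prim b') s) (divn_eq (dlog w_prim b) s) eq_mod_s bi b'i.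
by apply/eqP/val_inj; rewrite /= !(dlogE w_prim) e.
Qed.

(* The folded qudits meeting {p | p^r = b^r} for b in the folded qudit i. *)
Definition recovery_set (i : 'I_M) : {set 'I_M} := [set j : 'I_M | (j == i %[mod m'])%N].

Lemma check_vec_supp i b p : b \in region [set i] -> p \notin region (recovery_set i) ->
  check_vec r b p = 0.
Proof.
rewrite mem_region1 (mem_fold_region s_dvdN) inE => /eqP bi.
rewrite check_vecE // expr_eq_dlog; case: ifP => // eq_mod; apply: contraNeq => _.
by rewrite /= modn_divl divnK // (eqP eq_mod) -{1}(divnK s_dvd) -modn_divl bi.
Qed.

Lemma card_recovery_set i : (#|recovery_set i| <= r)%N.
Proof.
have N_gt0 : (0 < N)%N by rewrite -subn1 subn_gt0 finNzRing_gt1.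
have m_gt0 : (0 < m)%N by rewrite divn_gt0 ?(ltnW r_gt1) // (dvdn_leq N_gt0 r_dvd).
have s_gt0 : (0 < s)%N := dvdn_gt0 m_gt0 s_dvd.
have m'_gt0 : (0 < m')%N by rewrite divn_gt0 // (dvdn_leq m_gt0 s_dvd).
have ME : M = (m' * r)%N by rewrite -{1}(divnK r_dvd) -{1}(divnK s_dvd) mulnAC mulnK.
have lt_r (j : 'I_M) : (j %/ m' < r)%N by rewrite ltn_divLR // mulnC -ME.
have inj : {in recovery_set i &, injective (fun j => Ordinal (lt_r j))}.
  move=> j1 j2; rewrite !inE => /eqP j1i /eqP j2i /(congr1 val) /= j12.
  by apply: val_inj; rewrite /= (divn_eq j1 m') (divn_eq j2 m') j12 j1i j2i.
by rewrite -(card_in_imset inj) (leq_trans (max_card _)) ?card_ord.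
Qed.

End RecoverySets.

Theorem corollary5p10 (F : finFieldType) (Cf : numClosedFieldType)
    (r l s : nat) (w : F) :
  (r %| #|F|.-1)%N -> (3 <= r)%N ->
  (#|F| <= 2 * l)%N -> (l <= #|F|.-1)%N ->
  (s %| #|F|.-1 %/ r)%N ->
  (#|F|.-1).-primitive_root w ->
  folded_TB_QLRC r l Cf w s.
Proof.
move=> r_dvd r_ge3 _ _ s_dvd w_prim i.
have r_gt1 : (1 < r)%N := ltnW r_ge3.
have mem_region := mem_fold_region (dvdn_trans s_dvd (dvdn_div r_dvd)) w_prim.
exists (recovery_set r i); split; first by rewrite inE.
  exact: card_recovery_set r_dvd r_gt1 s_dvd i.
have -> : fold_region w (recovery_set r i :\ i)
          = fold_region w (recovery_set r i) :\: fold_region w [set i].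
  by apply/setP => p; rewrite in_setD !mem_region in_setD1 in_set1 andbC.
apply: erasure_recovery.
- by apply/subsetP => p; rewrite !mem_region in_set1 => /eqP ->; rewrite inE.
- by move=> b _; apply: check_vec_code.
- by move=> b _; apply: (check_vec_dual r_dvd _ _ r_ge3 w_prim).
- by move=> b p; apply: check_vec_supp.
- by move=> b _; apply: check_vec_diag.
- by move=> b b'; apply: check_vec_offdiag.
Qed.
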